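(* Let $K\subseteq\mathbb{R}$ be a field, $K^+=\{x\in K:x>0\}$, and suppose $K^+=H_1\sqcup H_2\sqcup\cdots\sqcup H_\lambda$ is a partition of $K^+$ into pairwise disjoint subsets each closed under addition and multiplication (indexed by some index set of size $\lambda$). Then: (a) If $a, a+q\in H_1$ for some $q\in\mathbb{Q}^+$, then $a+r\in H_1$ for every $r\in\mathbb{Q}^+$. (b) If $\lambda$ is finite, then for every $a\in K^+$ and every $q\in\mathbb{Q}$ with $a+q>0$, the elements $a$ and $a+q$ lie in the same part of the partition. *)

From Stdlib Require Export Reals QArith Qreals List.
Open Scope R_scope.

Definition is_subfield (K : R -> Prop) : Prop :=
  K 0 /\ K 1 /\
  (forall x y, K x -> K y -> K (x + y)) /\
  (forall x, K x -> K (- x)) /\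
  (forall x y, K x -> K y -> K (x * y)) /\
  (forall x, K x -> x <> 0 -> K (/ x)).

Definition Kpos (K : R -> Prop) (x : R) : Prop := K x /\ 0 < x.

Definition add_mul_partition (K : R -> Prop) {I : Type} (H : I -> R -> Prop)
  : Prop :=
  (forall x, Kpos K x <-> exists i, H i x) /\
  (forall i j x, H i x -> H j x -> i = j) /\
  (forall i x y, H i x -> H i y -> H i (x + y)) /\
  (forall i x y, H i x -> H i y -> H i (x * y)).

Definition finite_type (I : Type) : Prop :=
  exists l : list I, forall i : I, In i l.

From Stdlib Require Import Reals QArith Qreals List Permutation Lra Lia.
Open Scope R_scope.

(* Each part is closed under multiplication by a positive rational c = m/n,
   because n (c y) and m y are the same element, lying in the parts of c y
   and of y respectively.  Hence a part containing x and x + s, with s a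
   positive rational, contains x + t for 0 < t <= s (a positive rational
   combination of x and x + s) and x + 2s (as (x + 2s)^2 = x^2 + 4s(x + s));
   so it contains x + r for every positive rational r.  When there are
   finitely many parts, two of the points a - 1/(N + k), k in nat, which lie
   in K^+ below a, share a part; that part then contains every point above
   them at a rational distance, among them a and a + q. *)

Definition rational (x : R) : Prop := exists q : Q, x = Q2R q.

Lemma rational_Q2R q : rational (Q2R q).
Proof. now exists q. Qed.

Lemma rational_IZR z : rational (IZR z).
Proof. exists (inject_Z z). unfold Q2R; simpl. field. Qed.

Lemma rational_INR n : rational (INR n).
Proof. rewrite INR_IZR_INZ. apply rational_IZR. Qed.

Lemma rational_plus x y : rational x -> rational y -> rational (x + y).
Proof. intros [p ->] [q ->]. exists (p + q)%Q. now rewrite Q2R_plus. Qed.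

Lemma rational_opp x : rational x -> rational (- x).
Proof. intros [q ->]. exists (- q)%Q. now rewrite Q2R_opp. Qed.

Lemma rational_minus x y : rational x -> rational y -> rational (x - y).
Proof. intros Hx Hy. apply rational_plus; [exact Hx | now apply rational_opp]. Qed.

Lemma rational_mult x y : rational x -> rational y -> rational (x * y).
Proof. intros [p ->] [q ->]. exists (p * q)%Q. now rewrite Q2R_mult. Qed.

Lemma rational_inv x : rational x -> rational (/ x).
Proof.
  intros [q ->]. destruct (Qeq_dec q 0) as [Hq | Hq].
  - exists 0%Q. now rewrite (Qeq_eqR _ _ Hq), RMicromega.Q2R_0, Rinv_0.
  - exists (/ q)%Q. now rewrite Q2R_inv.
Qed.

Lemma rational_div x y : rational x -> rational y -> rational (x / y).
Proof. intros Hx Hy. apply rational_mult; [exact Hx | now apply rational_inv]. Qed.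

Lemma rational_pos_ratio c : rational c -> 0 < c ->
  exists m n : nat, c * INR (S n) = INR (S m).
Proof.
  intros [[z d] ->] Hc. unfold Q2R in *; cbn [Qnum Qden] in *.
  assert (Hd : 0 < IZR (Zpos d)) by (apply IZR_lt; lia).
  assert (Hz : (0 < z)%Z).
  { apply lt_IZR, (Rmult_lt_reg_r (/ IZR (Zpos d))); [now apply Rinv_0_lt_compat | lra]. }
  exists (Z.to_nat z - 1)%nat, (Pos.to_nat d - 1)%nat.
  rewrite !INR_IZR_INZ.
  replace (Z.of_nat (S (Z.to_nat z - 1))) with z by lia.
  replace (Z.of_nat (S (Pos.to_nat d - 1))) with (Zpos d) by lia.
  field. lra.
Qed.

Lemma Rinv_INR_lt m n : (0 < m < n)%nat -> / INR n < / INR m.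
Proof.
  intros Hmn. apply Rinv_lt_contravar; [| apply lt_INR; lia].
  apply Rmult_lt_0_compat; apply lt_0_INR; lia.
Qed.

Lemma finite_pigeonhole {J : Type} (P : nat -> J -> Prop) :
  finite_type J -> (forall k, exists j, P k j) ->
  exists k k' j, (k < k')%nat /\ P k j /\ P k' j.
Proof.
  intros [l Hl] HP.
  destruct (Permutation_pigeonhole_rel P (l1 := seq 0 (S (length l))) (l2 := l))
    as (k & k' & ks & Hperm & j & _ & Hk & Hk').
  - apply Forall_forall. intros k _. destruct (HP k) as [j Hj].
    apply Exists_exists. eauto.
  - rewrite length_seq. lia.
  - pose proof (Permutation_NoDup Hperm (seq_NoDup _ _)) as Hnd.
    destruct (Nat.lt_total k k') as [Hlt | [<- | Hgt]].
    + now exists k, k', j.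
    + apply NoDup_cons_iff in Hnd as [Hnin _]. destruct Hnin. now left.
    + now exists k', k, j.
Qed.

Section AddMulPartition.

Variables (K : R -> Prop) (I : Type) (H : I -> R -> Prop).
Hypotheses (hK : is_subfield K) (hH : add_mul_partition K H).

Lemma K_0 : K 0.
Proof. now apply hK. Qed.

Lemma K_1 : K 1.
Proof. now apply hK. Qed.

Lemma K_plus x y : K x -> K y -> K (x + y).
Proof. intros; now apply hK. Qed.

Lemma K_opp x : K x -> K (- x).
Proof. intros; now apply hK. Qed.

Lemma K_mult x y : K x -> K y -> K (x * y).
Proof. intros; now apply hK. Qed.

Lemma K_inv x : K x -> x <> 0 -> K (/ x).
Proof. intros; now apply hK. Qed.

Lemma K_INR n : K (INR n).
Proof.
  induction n as [|n IH]; [exact K_0|].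
  rewrite S_INR. apply K_plus; [exact IH | exact K_1].
Qed.

Lemma K_IZR z : K (IZR z).
Proof.
  destruct z as [|p|p]; [exact K_0 | | apply K_opp];
    change (K (IPR p)); rewrite <- INR_IPR; apply K_INR.
Qed.

Lemma K_rational x : rational x -> K x.
Proof.
  intros [[z d] ->]. unfold Q2R; simpl.
  apply K_mult; [apply K_IZR |].
  apply K_inv; [apply K_IZR | apply not_0_IZR; discriminate].
Qed.

Lemma K_plus_rational x r : K x -> rational r -> K (x + r).
Proof. intros Kx Qr. apply K_plus; [exact Kx | now apply K_rational]. Qed.

Lemma H_Kpos i x : H i x -> Kpos K x.
Proof. intros Hx. apply (proj1 hH). eauto. Qed.

Lemma H_cover x : Kpos K x -> exists i, H i x.
Proof. apply (proj1 hH). Qed.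

Lemma H_unique i j x : H i x -> H j x -> i = j.
Proof. apply (proj1 (proj2 hH)). Qed.

Lemma H_plus i x y : H i x -> H i y -> H i (x + y).
Proof. apply (proj1 (proj2 (proj2 hH))). Qed.

Lemma H_mult i x y : H i x -> H i y -> H i (x * y).
Proof. apply (proj2 (proj2 (proj2 hH))). Qed.

Lemma H_transport i w w' :
  Kpos K w -> (forall j, H j w -> H j w') -> H i w' -> H i w.
Proof.
  intros Kw Hww' Hiw'. destruct (H_cover w Kw) as [j Hj].
  now rewrite (H_unique i j w' Hiw' (Hww' j Hj)).
Qed.

Lemma H_INR_mult i y n : H i y -> H i (INR (S n) * y).
Proof.
  intros Hy. induction n as [|n IH].
  - now rewrite Rmult_1_l.
  - rewrite (S_INR (S n)), Rmult_plus_distr_r, Rmult_1_l.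
    now apply H_plus.
Qed.

Lemma H_scale i c y : rational c -> 0 < c -> H i y -> H i (c * y).
Proof.
  intros Qc Pc Hy. destruct (H_Kpos i y Hy) as [Ky Py].
  destruct (rational_pos_ratio c Qc Pc) as (m & n & Ec).
  apply (H_transport i (c * y) (INR (S m) * y)).
  - split; [apply K_mult; [now apply K_rational | exact Ky] | now apply Rmult_lt_0_compat].
  - intros j Hj. replace (INR (S m) * y) with (INR (S n) * (c * y)) by (rewrite <- Ec; ring).
    now apply H_INR_mult.
  - now apply H_INR_mult.
Qed.

Lemma H_shift_le i x s t : rational s -> rational t -> 0 < t <= s ->
  H i x -> H i (x + s) -> H i (x + t).
Proof.
  intros Qs Qt [Pt Hts] Hx Hxs.
  destruct (Req_dec t s) as [-> | Hne]; [exact Hxs |].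
  replace (x + t) with ((s - t) / s * x + t / s * (x + s)) by (field; lra).
  apply H_plus; apply H_scale; auto.
  - apply rational_div; [now apply rational_minus | exact Qs].
  - apply Rdiv_lt_0_compat; lra.
  - now apply rational_div.
  - apply Rdiv_lt_0_compat; lra.
Qed.

Lemma H_shift_double i x s : rational s -> 0 < s ->
  H i x -> H i (x + s) -> H i (x + 2 * s).
Proof.
  intros Qs Ps Hx Hxs. destruct (H_Kpos i x Hx) as [Kx Px].
  assert (Q2s : rational (2 * s)) by (apply rational_mult; [apply rational_IZR | exact Qs]).
  apply (H_transport i _ ((x + 2 * s) * (x + 2 * s))).
  - split; [now apply K_plus_rational | lra].
  - intros j Hj. now apply H_mult.
  - replace ((x + 2 * s) * (x + 2 * s)) with (x * x + 4 * s * (x + s)) by ring.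
    apply H_plus; [now apply H_mult |].
    apply H_scale; [apply rational_mult; [apply rational_IZR | exact Qs] | lra | exact Hxs].
Qed.

Lemma H_shift_INR_mult i x s n : rational s -> 0 < s ->
  H i x -> H i (x + s) -> H i (x + INR (S n) * s).
Proof.
  intros Qs Ps Hx Hxs. induction n as [|n IH].
  - now rewrite Rmult_1_l.
  - assert (Qns : rational (INR (S n) * s)) by (apply rational_mult; [apply rational_INR | exact Qs]).
    assert (Pn := pos_INR n).
    apply (H_shift_le i x (2 * (INR (S n) * s))).
    + apply rational_mult; [apply rational_IZR | exact Qns].
    + apply rational_mult; [apply rational_INR | exact Qs].
    + rewrite !S_INR. split; nra.
    + exact Hx.
    + apply H_shift_double; [exact Qns | rewrite S_INR; nra | exact Hx | exact IH].
Qed.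

Lemma H_shift i x s : rational s -> 0 < s -> H i x -> H i (x + s) ->
  forall y, x < y -> rational (y - x) -> H i y.
Proof.
  intros Qs Ps Hx Hxs y Hxy Qyx.
  destruct (INR_archimed s (y - x) Ps) as [n Hn].
  replace y with (x + (y - x)) by ring.
  apply (H_shift_le i x (INR (S n) * s)); [| exact Qyx | | exact Hx |].
  - apply rational_mult; [apply rational_INR | exact Qs].
  - rewrite S_INR. lra.
  - now apply H_shift_INR_mult.
Qed.

Lemma H_anchor (fin : finite_type I) a : Kpos K a ->
  exists i x, x < a /\ rational (a - x) /\
    forall y, x < y -> rational (y - x) -> H i y.
Proof.
  intros [Ka Pa]. destruct (archimed_cor1 a Pa) as (N & HNa & PN).
  set (u k := / INR (N + k)).
  assert (Qu : forall k, rational (u k)) by (intro k; apply rational_inv, rational_INR).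
  assert (Pu : forall k, 0 < u k) by (intro k; apply Rinv_0_lt_compat, lt_0_INR; lia).
  assert (Hua : forall k, u k < a).
  { intro k. apply (Rle_lt_trans _ (/ INR N)); [| exact HNa].
    apply Rinv_le_contravar; [now apply lt_0_INR | apply le_INR; lia]. }
  assert (Kp : forall k, Kpos K (a - u k)).
  { intro k. split; [apply K_plus_rational; [exact Ka | apply rational_opp, Qu] | specialize (Hua k); lra]. }
  destruct (finite_pigeonhole (fun k i => H i (a - u k)) fin) as (k & k' & i & Hkk' & Hk & Hk').
  { intro k. apply H_cover, Kp. }
  assert (Huu : u k' < u k) by (apply Rinv_INR_lt; lia).
  exists i, (a - u k). split; [| split].
  - specialize (Pu k). lra.
  - replace (a - (a - u k)) with (u k) by ring. apply Qu.
  - apply (H_shift i (a - u k) (u k - u k')).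
    + apply rational_minus; apply Qu.
    + lra.
    + exact Hk.
    + now replace (a - u k + (u k - u k')) with (a - u k') by ring.
Qed.

Lemma H_same_part_le (fin : finite_type I) a b : Kpos K a -> a <= b -> rational (b - a) ->
  exists i, H i a /\ H i b.
Proof.
  intros Ka Hab Qab. destruct (H_anchor fin a Ka) as (i & x & Hxa & Qax & Hx).
  exists i. split; apply Hx; [exact Hxa | exact Qax | lra |].
  replace (b - x) with (b - a + (a - x)) by ring. now apply rational_plus.
Qed.

Lemma H_same_part (fin : finite_type I) a b : Kpos K a -> Kpos K b -> rational (b - a) ->
  exists i, H i a /\ H i b.
Proof.
  intros Ka Kb Qab. destruct (Rle_or_lt a b) as [Hab | Hba].
  - now apply H_same_part_le.
  - destruct (H_same_part_le fin b a Kb) as (i & Hb & Ha); [lra | |].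
    + replace (a - b) with (- (b - a)) by ring. now apply rational_opp.
    + now exists i.
Qed.

End AddMulPartition.

Theorem lemma3p1 (K : R -> Prop) (I : Type) (H : I -> R -> Prop) (i1 : I)
  (hK : is_subfield K) (hH : add_mul_partition K H) :
  (* (a) *)
  (forall (a : R) (q : Q), (0 < q)%Q -> H i1 a -> H i1 (a + Q2R q) ->
     forall r : Q, (0 < r)%Q -> H i1 (a + Q2R r)) /\
  (* (b) *)
  (finite_type I ->
     forall (a : R) (q : Q), Kpos K a -> 0 < a + Q2R q ->
       exists i : I, H i a /\ H i (a + Q2R q)).
Proof.
  assert (Qshift : forall a q, rational (a + Q2R q - a)).
  { intros a q. replace (a + Q2R q - a) with (Q2R q) by ring. apply rational_Q2R. }
  split.
  - intros a q Pq Ha Haq r Pr.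
    apply Qlt_Rlt in Pq, Pr. rewrite RMicromega.Q2R_0 in Pq, Pr.
    apply (H_shift K I H hK hH i1 a (Q2R q)); auto using rational_Q2R; lra.
  - intros fin a q Ka Paq.
    apply (H_same_part K I H hK hH fin); auto.
    split; [apply K_plus_rational; [exact hK | apply Ka | apply rational_Q2R] | exact Paq].
Qed.
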